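(* Let $k\ge1$ and let $e_1,\dots,e_k,f_1,\dots,f_k$ be integers such that $e_1,e_2+1,\dots,e_k+k-1$ are distinct nonnegative integers and $f_1,f_2+1,\dots,f_k+k-1$ are distinct elements of $\{0,1,\dots,2k-1\}$. Let $c_1<c_2<\cdots<c_k$ be the elements of the complement $\{0,1,\dots,2k-1\}\setminus\{f_1,f_2+1,\dots,f_k+k-1\}$. Let $D$ be the $2k\times 2k$ determinant with entries, for $1\le i\le k$, $1\le j\le 2k$, $$D_{ij}=\Gamma(2k-i-j+2-e_i)^{-1},\qquad D_{k+i,j}=(-1)^{i+j-1}\Gamma(2k-i-j+2-f_i)^{-1}$$ (with $1/\Gamma(m)=0$ for $m\in\{0,-1,-2,\dots\}$). Then $$D=\operatorname{sgn}(f)\Bigl(\prod_{l=0}^{k-1}\frac{(e_{l+1}+l)!\,(f_{l+1}+l)!}{l!\,(k+l)!}\,2^{c_{l+1}-e_{l+1}-l}\Bigr)\det\Bigl(\binom{c_j}{e_i+i-1}\Bigr)_{1\le i,j\le k},$$ where $\operatorname{sgn}(f)$ is $(-1)$ raised to the number of transpositions needed to sort $f_1+1,f_2+2,\dots,f_k+k$ into increasing order. *)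

From HB Require Import structures.
From mathcomp Require Import all_boot all_order all_algebra.
Set Implicit Arguments. Unset Strict Implicit. Unset Printing Implicit Defensive.
Import Order.TTheory GRing.Theory Num.Theory.
Local Open Scope ring_scope.

Definition invGamma (R : numFieldType) (m : int) : R :=
  if (0 < m)%R then (((absz m).-1)`!)%:R^-1 else 0.

(* shifted sequence a_i + i (0-based index i, corresponding to a_{i+1}+i) *)
Definition shift (k : nat) (a : 'I_k -> int) (i : 'I_k) : int := a i + (i : nat)%:Z.

Definition compl_seq (k : nat) (f : 'I_k -> int) : seq nat :=
  [seq c <- iota 0 (k + k) | (c%:Z) \notin [seq shift f i | i <- enum 'I_k]].

Definition ninv (k : nat) (f : 'I_k -> int) : nat :=
  #|[set p : 'I_k * 'I_k | (p.1 < p.2)%N && (shift f p.2 < shift f p.1)]|.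

Definition sgnf (R : numFieldType) (k : nat) (f : 'I_k -> int) : R :=
  (-1) ^+ ninv f.

(* The 2k x 2k matrix D, 0-based indices: rows i < k give
   D_{i+1,j+1} = 1/Gamma(2k - i - j - e_{i+1}); rows k+i give
   (-1)^(i+j+1) / Gamma(2k - i - j - f_{i+1}). *)
Definition Dmat (R : numFieldType) (k : nat) (e f : 'I_k -> int) : 'M[R]_(k + k) :=
  col_mx
    (\matrix_(i < k, j < k + k)
       invGamma R ((k + k)%:Z - (i : nat)%:Z - (j : nat)%:Z - e i))
    (\matrix_(i < k, j < k + k)
       ((-1) ^+ (i + j + 1)%N *
        invGamma R ((k + k)%:Z - (i : nat)%:Z - (j : nat)%:Z - f i))).

From HB Require Import structures.
From mathcomp Require Import all_boot all_order all_algebra ring zify.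
From mathcomp Require Import perm.
Set Implicit Arguments. Unset Strict Implicit. Unset Printing Implicit Defensive.
Import Order.TTheory GRing.Theory Num.Theory.
Local Open Scope ring_scope.

(* Write a_i = e_i + i - 1, b_i = f_i + i - 1 and index columns by m = 2k - j.
   Since 1/Gamma(m + 1 - a) = a! C(m, a) / m! and
   sum_x (-1)^(m-x) C(m, x) C(x, a) 2^x = 2^a C(m, a), D factors as Dleft * Dright,
   where Dright is triangular with determinant 1 / prod_(m < 2k) m!, the first k
   rows of Dleft are (a_i! C(x, a_i) 2^(x - a_i))_x and its last k rows are signed
   multiples of the unit vectors at x = b_i.  Moving the columns c_1 < ... < c_k of
   Dleft to the front makes it block triangular, with the binomial matrix (up to
   powers of 2 and factorials) and a diagonal block.  The parity of that column
   permutation is its number of inversions (the Vandermonde determinant identifies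
   it with the signature), and counting them yields sgn(f). *)

Lemma mul_bin_bin m x a : (a <= x <= m)%N ->
  ('C(m, x) * 'C(x, a) = 'C(m, a) * 'C(m - a, x - a))%N.
Proof.
case/andP=> ax xm; have am := leq_trans ax xm.
apply/eqP; rewrite -(eqn_pmul2r (fact_gt0 a)) -(eqn_pmul2r (fact_gt0 (x - a))).
rewrite -(eqn_pmul2r (fact_gt0 (m - x))).
have ma_xa : (m - a - (x - a) = m - x)%N by lia.
have := bin_fact ax; have := bin_fact xm; have := bin_fact am.
have := bin_fact (leq_sub2r a xm); rewrite ma_xa => E4 E3 E2 E1.
apply/eqP; transitivity ('C(m, x) * ('C(x, a) * (a`! * (x - a)`!)) * (m - x)`!)%N; first ring.
rewrite E1 -mulnA E2 -E3 -E4; ring.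
Qed.

Lemma sum_bin_bin_sign (R : comPzRingType) (N m a : nat) : (m < N)%N ->
  \sum_(x < N) (-1) ^+ (m - x) * 'C(m, x)%:R * 'C(x, a)%:R * 2 ^+ x
  = 'C(m, a)%:R * 2 ^+ a :> R.
Proof.
move=> mN.
rewrite -(big_mkord xpredT (fun x => (-1) ^+ (m - x) * 'C(m, x)%:R * 'C(x, a)%:R * 2 ^+ x)).
rewrite (big_cat_nat (leq0n m.+1) mN) /= [X in _ + X]big_nat_cond [X in _ + X]big1 ?addr0;
  last by move=> x /andP[/andP[mx _] _]; rewrite bin_small // mulr0 !mul0r.
case: (leqP a m) => am; last first.
  rewrite bin_small // mul0r big_nat_cond big1 // => x /andP[/andP[_ xm] _].
  by rewrite (@bin_small x a) ?mulr0 ?mul0r // (leq_trans xm am).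
rewrite (big_cat_nat (leq0n a) (leqW am)) /= [X in X + _]big_nat_cond [X in X + _]big1 ?add0r;
  last by move=> x /andP[/andP[_ xa] _]; rewrite (@bin_small x a) // mulr0 mul0r.
(* Substituting x = a + t, mul_bin_bin turns the sum into C(m, a) 2^a (2 - 1)^(m - a). *)
rewrite -{1}(add0n a) big_addn subSn // big_mkord.
have binomial_1 : \sum_(t < (m - a).+1) (-1) ^+ (m - a - t) * 2 ^+ t *+ 'C(m - a, t) = 1 :> R.
  by rewrite -exprDn (_ : -1 + 2 = 1) ?expr1n //; ring.
transitivity ('C(m, a)%:R * 2 ^+ a *
  \sum_(t < (m - a).+1) (-1) ^+ (m - a - t) * 2 ^+ t *+ 'C(m - a, t) : R);
  last by rewrite binomial_1 mulr1.
rewrite mulr_sumr; apply: eq_bigr => t _.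
have tm : (a + t <= m)%N by have := ltn_ord t; lia.
have := mul_bin_bin (_ : (a <= a + t <= m)%N); rewrite leq_addr tm => /(_ isT).
rewrite addKn addnC => /(congr1 (GRing.natmul (1 : R))); rewrite !natrM => bin_eq.
rewrite (_ : (m - (t + a) = m - a - t)%N); last by lia.
rewrite exprD -mulrnAr -mulr_natr.
transitivity ((-1) ^+ (m - a - t) * ('C(m, t + a)%:R * 'C(t + a, a)%:R) * 2 ^+ t * 2 ^+ a : R).
  by ring.
rewrite bin_eq; ring.
Qed.

Lemma invGamma_subn (R : numFieldType) (m a : nat) :
  invGamma R (m.+1%:Z - a%:Z) = a`!%:R * 'C(m, a)%:R / m`!%:R.
Proof.
rewrite /invGamma; case: (leqP a m) => am; last first.
  by rewrite ifF ?bin_small ?mulr0 ?mul0r //; apply/negbTE; lia.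
rewrite (_ : m.+1%:Z - a%:Z = (m - a).+1%:Z); last by lia.
rewrite ltz_nat /= -(bin_fact am) !natrM.
have fact_neq0 n : n`!%:R != 0 :> R by rewrite pnatr_eq0 -lt0n fact_gt0.
have bin_neq0 : 'C(m, a)%:R != 0 :> R by rewrite pnatr_eq0 -lt0n bin_gt0.
by field; rewrite !fact_neq0 bin_neq0.
Qed.

Lemma signr_parity (R : pzRingType) x y u v :
  (x + u * 2 = y + v * 2)%N -> (-1) ^+ x = (-1) ^+ y :> R.
Proof.
move=> /(congr1 odd); rewrite !oddD !oddM /= !andbF !addbF => odd_xy.
by rewrite -signr_odd odd_xy -[RHS]signr_odd.
Qed.

Lemma sum_ord_ltn n x : (x <= n)%N -> (\sum_(y < n) (y < x) = x)%N.
Proof.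
move=> xn; rewrite -(big_mkord xpredT (fun y => nat_of_bool (y < x)%N)).
rewrite (big_cat_nat (leq0n x) xn) /=.
rewrite big_nat_cond (eq_bigr (fun=> 1%N)) => [|y /andP[/andP[_ ->]]] //.
rewrite -big_nat_cond sum_nat_const_nat muln1 subn0 big_nat_cond big1 ?addn0 //.
by move=> y /andP[/andP[+ _] _]; rewrite leqNgt => /negbTE ->.
Qed.

Definition inversions p (t : 'I_p -> nat) : nat :=
  \sum_(i < p) \sum_(j < p | (i < j)%N) (t j < t i).

Definition ascents p (t : 'I_p -> nat) : nat :=
  \sum_(i < p) \sum_(j < p | (i < j)%N) (t i < t j).

Lemma prod_pairs_perm (R : comPzRingType) n (s : 'S_n) (G : 'I_n -> 'I_n -> R) :
  (forall x y, G x y = G y x) ->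
  \prod_(q : 'I_n * 'I_n | (q.1 < q.2)%N) G (s q.1) (s q.2)
  = \prod_(q : 'I_n * 'I_n | (q.1 < q.2)%N) G q.1 q.2.
Proof.
move=> Gsym; pose ss (q : 'I_n * 'I_n) := (s q.1, s q.2).
have ss_inj : injective ss by move=> [x y] [x' y'] [/perm_inj-> /perm_inj->].
rewrite [RHS](reindex_inj ss_inj) /= [RHS](bigID (fun q : 'I_n * 'I_n => (q.1 < q.2)%N)) /=.
rewrite [LHS](bigID (fun q : 'I_n * 'I_n => (s q.1 < s q.2)%N)) /=; congr (_ * _).
  by apply: eq_bigl => q; rewrite andbC.
pose sw (q : 'I_n * 'I_n) := (q.2, q.1).
have sw_inj : injective sw by move=> [x y] [x' y'] [-> ->].
rewrite [RHS](reindex_inj sw_inj) /=; apply: eq_big => [[x y] /=|q _]; last exact: Gsym.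
have [xy|yx|/val_inj->] /= := ltngtP x y; last by rewrite ltnn.
  have neq : s y != s x by rewrite (inj_eq perm_inj) -val_eqE /= gtn_eqF.
  by rewrite andbT -leqNgt leq_eqVlt val_eqE (negbTE neq).
by rewrite andbF.
Qed.

Lemma det_col_perm (R : comPzRingType) n (s : 'S_n) (A : 'M[R]_n) :
  \det (col_perm s A) = (-1) ^+ s * \det A.
Proof. by rewrite col_permE det_mulmx det_perm odd_permV mulrC. Qed.

Lemma odd_perm_inversions n (s : 'S_n) :
  odd_perm s = odd (inversions (fun i => s i : nat)).
Proof.
apply: (@signr_inj int); rewrite signr_odd.
pose V (t : 'I_n -> nat) := Vandermonde n (\row_j ((t j)%:R : int)).
have detV t : \det (V t) = \prod_(q : 'I_n * 'I_n | (q.1 < q.2)%N) ((t q.2)%:R - (t q.1)%:R).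
  by rewrite det_Vandermonde pair_big_dep /=; apply: eq_bigr => q _; rewrite !mxE.
have V_perm : V (fun i => s i) = col_perm s (V id).
  by apply/matrixP => i j; rewrite !mxE.
have detV_neq0 : \det (V id) != 0.
  by rewrite detV; apply/prodf_neq0 => q lt_q; rewrite subr_eq0 eqr_nat gtn_eqF.
apply: (mulIf detV_neq0); rewrite -det_col_perm -V_perm.
pose dist (x y : 'I_n) := `|(y : nat)%:R - (x : nat)%:R| : int.
have sign_dist (x y : nat) : (y%:R - x%:R : int) = (-1) ^+ (y < x)%N * `|y%:R - x%:R|.
  case: ltnP => [yx | xy]; first by rewrite mulN1r ltr0_norm ?opprK // subr_lt0 ltr_nat.
  by rewrite mul1r ger0_norm // subr_ge0 ler_nat.
transitivity (\prod_(q : 'I_n * 'I_n | (q.1 < q.2)%N)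
                ((-1) ^+ (s q.2 < s q.1)%N * dist (s q.1) (s q.2))).
  by rewrite detV; apply: eq_bigr => q _; rewrite sign_dist.
rewrite big_split /= prod_pairs_perm => [|x y]; last by rewrite /dist distrC.
rewrite prodrXr /inversions pair_big_dep detV; congr (_ ^+ _ * _).
apply: eq_bigr => q lt_q.
by rewrite /dist ger0_norm // subr_ge0 ler_nat ltnW.
Qed.

Lemma sign_perm_inversions (R : pzRingType) n (s : 'S_n) :
  (-1) ^+ s = (-1) ^+ inversions (fun i => s i : nat) :> R.
Proof. by rewrite -[RHS]signr_odd -odd_perm_inversions. Qed.

Lemma ascents_add_inversions p (t : 'I_p -> nat) :
  injective t -> (ascents t + inversions t = 'C(p, 2))%N.
Proof.
move=> t_inj; rewrite -big_split /=.
transitivity (\sum_(i < p) \sum_(j < p | (i < j)%N) 1)%N.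
  apply: eq_bigr => i _; rewrite -big_split /=; apply: eq_bigr => j lt_ij.
  have : t i != t j by rewrite (inj_eq t_inj) -val_eqE /= ltn_eqF.
  by case: ltngtP.
rewrite (exchange_big_dep xpredT) //= -bin2_sum big_mkord; apply: eq_bigr => j _.
rewrite big_mkcond -[RHS](sum_ord_ltn (ltnW (ltn_ord j))).
by apply: eq_bigr => i _; case: (i < j)%N.
Qed.

Lemma sum_ltn_pairs p (t : 'I_p -> nat) :
  (\sum_(i < p) \sum_(j < p) (t j < t i) = inversions t + ascents t)%N.
Proof.
transitivity (\sum_(i < p) (\sum_(j < p | (i < j)%N) (t j < t i)
                             + \sum_(j < p | (j < i)%N) (t j < t i)))%N.
  apply: eq_bigr => i _; rewrite (bigID (fun j : 'I_p => (i < j)%N)) /=; congr (_ + _).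
  rewrite [LHS]big_mkcond [RHS]big_mkcond; apply: eq_bigr => j _ /=.
  by case: (ltngtP i j) => // ij; rewrite (ord_inj ij) ltnn.
rewrite big_split /=; congr (_ + _); exact: (exchange_big_dep xpredT).
Qed.

Lemma ascents_split m n (t : 'I_(m + n) -> nat) (u : 'I_m -> nat) (v : 'I_n -> nat) :
  (forall i, t (lshift n i) = u i) -> (forall j, t (rshift m j) = v j) ->
  ascents t = (ascents u + ascents v + \sum_(i < m) \sum_(j < n) (u i < v j))%N.
Proof.
move=> tl tr; rewrite /ascents big_split_ord /= addnAC; congr (_ + _).
  rewrite -big_split; apply: eq_bigr => i _ /=.
  rewrite big_split_ord /=; congr (_ + _).
    by apply: eq_bigr => j _; rewrite !tl.
  by apply: eq_big => [j|j _]; rewrite ?ltn_addr ?tl ?tr.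
apply: eq_bigr => i _; rewrite big_split_ord /= big_pred0 => [|j]; last first.
  by apply/negbTE; rewrite -leqNgt (leq_trans (ltnW (ltn_ord j)) (leq_addr _ _)).
by rewrite add0n; apply: eq_big => [j|j _]; rewrite ?ltn_add2l ?tr.
Qed.

Lemma inversions_rev_ord p n (t : 'I_p -> 'I_n) :
  inversions (fun i => rev_ord (t i) : nat) = ascents (fun i => t i : nat).
Proof.
apply: eq_bigr => i _; apply: eq_bigr => j _ /=.
by have := ltn_ord (t i); have := ltn_ord (t j); lia.
Qed.

Lemma det_scale_rows_cols (R : comPzRingType) n (r s : 'I_n -> R) (A : 'M[R]_n) :
  \det (\matrix_(i, j) (r i * A i j * s j)) = \prod_i r i * \prod_j s j * \det A.
Proof.
have -> : \matrix_(i, j) (r i * A i j * s j) = diag_mx (\row_i r i) *m A *m diag_mx (\row_j s j).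
  by rewrite mul_diag_mx mul_mx_diag; apply/matrixP => i j; rewrite !mxE.
rewrite !det_mulmx !det_diag mulrAC.
by congr (_ * _ * _); apply: eq_bigr => i _; rewrite mxE.
Qed.

Section DetDmat.
Variables (R : numFieldType) (k : nat) (e f : 'I_k -> int).
Hypotheses (e_ge0 : forall i, 0 <= shift e i)
  (f_bound : forall i, 0 <= shift f i < (k + k)%:Z) (f_inj : injective (shift f)).

Local Notation n := (k + k)%N.
Let a i := absz (shift e i).
Let b i := absz (shift f i).
Let c (j : 'I_k) := nth 0%N (compl_seq f) j.

Lemma aE i : (a i)%:Z = shift e i.
Proof. exact: gez0_abs. Qed.

Lemma bE i : (b i)%:Z = shift f i.
Proof. by apply: gez0_abs; case/andP: (f_bound i). Qed.

Lemma b_ltn i : (b i < n)%N.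
Proof. by rewrite -ltz_nat bE; case/andP: (f_bound i). Qed.

Lemma b_inj : injective b.
Proof. by move=> i j /(congr1 Posz); rewrite !bE => /f_inj. Qed.

Let bs := [seq b i | i <- enum 'I_k].

Lemma compl_seqE : compl_seq f = [seq x <- iota 0 n | x \notin bs].
Proof.
apply: eq_filter => x; congr negb; apply/mapP/mapP => -[i i_k x_i]; exists i => //.
  by apply/eqP; rewrite -eqz_nat bE x_i.
by rewrite x_i bE.
Qed.

Lemma size_compl_seq : size (compl_seq f) = k.
Proof.
have bs_uniq : uniq bs by rewrite map_inj_uniq ?enum_uniq //; apply: b_inj.
have : perm_eq [seq x <- iota 0 n | x \in bs] bs.
  apply: uniq_perm; rewrite ?filter_uniq ?iota_uniq // => x.
  rewrite mem_filter mem_iota /= add0n andb_idr // => /mapP[i _ ->].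
  exact: b_ltn.
move/perm_size; rewrite size_map size_enum_ord size_filter => count_bs.
apply/eqP; rewrite -(eqn_add2l k) -{1}count_bs compl_seqE size_filter.
by rewrite count_predC size_iota.
Qed.

Lemma c_mem j : c j \in compl_seq f.
Proof. by rewrite /c mem_nth // size_compl_seq. Qed.

Lemma c_ltn j : (c j < n)%N.
Proof. by have := c_mem j; rewrite compl_seqE mem_filter mem_iota add0n => /andP[]. Qed.

Lemma c_neq_b j i : c j != b i.
Proof.
have := c_mem j; rewrite compl_seqE mem_filter => /andP[+ _].
by apply: contraNneq => ->; apply: map_f; rewrite mem_enum.
Qed.

Lemma c_increasing (i j : 'I_k) : (i < j)%N -> (c i < c j)%N.
Proof.
have sorted_compl : sorted ltn (compl_seq f).
  by rewrite compl_seqE (sorted_filter ltn_trans) ?iota_ltn_sorted.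
by apply: (sorted_ltn_nth ltn_trans) => //; rewrite inE size_compl_seq.
Qed.

Lemma c_inj : injective c.
Proof.
move=> i j c_ij; apply/val_inj.
have [lt_ij|lt_ji|//] := ltngtP i j.
  by have := c_increasing lt_ij; rewrite c_ij ltnn.
by have := c_increasing lt_ji; rewrite c_ij ltnn.
Qed.

Definition colpos_sum (u : 'I_k + 'I_k) : nat :=
  match u with inl j => c j | inr i => b i end.

Lemma colpos_sum_ltn u : (colpos_sum u < n)%N.
Proof. by case: u => x; [exact: c_ltn | exact: b_ltn]. Qed.

Lemma colpos_sum_inj : injective colpos_sum.
Proof.
move=> [j|i] [j'|i'] /= eq_pos.
- by rewrite (c_inj eq_pos).
- by have := c_neq_b j i'; rewrite eq_pos eqxx.
- by have := c_neq_b j' i; rewrite eq_pos eqxx.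
- by rewrite (b_inj eq_pos).
Qed.

Definition colpos (r : 'I_n) : 'I_n := Ordinal (colpos_sum_ltn (split r)).

Lemma colpos_inj : injective colpos.
Proof. by move=> r r' /(congr1 val) /colpos_sum_inj; apply: (can_inj splitK). Qed.

Lemma colpos_lshift j : colpos (lshift k j) = c j :> nat.
Proof. by rewrite /= (unsplitK (inl _ j)). Qed.

Lemma colpos_rshift i : colpos (rshift k i) = b i :> nat.
Proof. by rewrite /= (unsplitK (inr _ i)). Qed.

Lemma sum_c_ltn_b i :
  (\sum_(j < k) (c j < b i) + \sum_(i' < k) (b i' < b i) = b i)%N.
Proof.
rewrite -[RHS](sum_ord_ltn (ltnW (b_ltn i))) (reindex_inj colpos_inj) big_split_ord.
by congr (_ + _); apply: eq_bigr => r _; rewrite ?colpos_lshift ?colpos_rshift.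
Qed.

Lemma ninvE : ninv f = inversions b.
Proof.
rewrite /ninv /inversions pair_big_dep -sum1dep_card [LHS]big_mkcond [RHS]big_mkcond.
by apply: eq_bigr => -[i j] _ /=; rewrite -!bE ltz_nat; case: (i < j)%N.
Qed.

(* Moves the columns x with rev x = c j to the front and those with rev x = b i to
   the back. *)
Lemma rev_colpos_inj : injective (fun r => rev_ord (colpos r)).
Proof. by move=> r r' /rev_ord_inj /colpos_inj. Qed.

Definition sigma : 'S_n := perm rev_colpos_inj.

Lemma sign_sigma :
  (-1) ^+ sigma * \prod_(i < k) (-1) ^+ (i + b i) = (-1) ^+ ninv f :> R.
Proof.
have inv_sigma : inversions (fun r => sigma r : nat)
    = (ascents c + ascents b + \sum_(i < k) \sum_(j < k) (c i < b j))%N.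
  rewrite -(ascents_split (t := fun r => colpos r : nat) colpos_lshift colpos_rshift).
  rewrite -inversions_rev_ord.
  by apply: eq_bigr => r _; apply: eq_bigr => r' _; rewrite !permE.
have asc_c : ascents c = 'C(k, 2).
  rewrite -(ascents_add_inversions c_inj) [inversions c]big1 ?addn0 // => i _.
  by rewrite big1 // => j /c_increasing /ltnW; rewrite leqNgt => /negbTE ->.
have asc_inv_b := ascents_add_inversions b_inj.
have sum_b : (\sum_(i < k) \sum_(j < k) (c i < b j) + 'C(k, 2) = \sum_(i < k) b i)%N.
  rewrite -asc_inv_b [(ascents b + _)%N]addnC -sum_ltn_pairs exchange_big -big_split /=.
  by apply: eq_bigr => i _; exact: sum_c_ltn_b.
have sum_ib : (\sum_(i < k) (i + b i) = 'C(k, 2) + \sum_(i < k) b i)%N.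
  by rewrite big_split /= -bin2_sum big_mkord.
rewrite sign_perm_inversions prodrXr sum_ib -exprD inv_sigma asc_c ninvE.
set X := (\sum_(i < k) \sum_(j < k) (c i < b j))%N in sum_b *.
by apply: (@signr_parity _ _ _ 0 ('C(k, 2) + ascents b + X)); lia.
Qed.

Definition Dright : 'M[R]_n := \matrix_(x, j)
  ((-1) ^+ (rev_ord j - rev_ord x) * 'C(rev_ord j, rev_ord x)%:R / (rev_ord j)`!%:R).

Definition Dleft : 'M[R]_n := col_mx
  (\matrix_(i < k, x < n)
     ((a i)`!%:R * 'C(rev_ord x, a i)%:R * 2 ^+ rev_ord x / 2 ^+ a i))
  (\matrix_(i < k, x < n)
     ((-1) ^+ (i + b i) * (b i)`!%:R * (rev_ord x == b i :> nat)%:R)).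

Lemma Dmat_factor : Dmat R e f = Dleft *m Dright.
Proof.
have fact_neq0 m : m`!%:R != 0 :> R by rewrite pnatr_eq0 -lt0n fact_gt0.
rewrite mul_col_mx; congr col_mx; apply/matrixP => i j; rewrite !mxE.
  under eq_bigr do rewrite !mxE.
  rewrite (reindex_inj rev_ord_inj); under eq_bigr do rewrite rev_ordK.
  set m := (rev_ord j : nat).
  have -> : n%:Z - i%:Z - j%:Z - e i = m.+1%:Z - (a i)%:Z.
    by rewrite aE /shift /m /=; have := ltn_ord j; lia.
  have exp2_neq0 : (2 : R) ^+ a i != 0 by rewrite expf_neq0 // pnatr_eq0.
  rewrite invGamma_subn; transitivity ((a i)`!%:R / 2 ^+ a i / m`!%:R *
     \sum_(x < n) (-1) ^+ (m - x) * 'C(m, x)%:R * 'C(x, a i)%:R * 2 ^+ x : R).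
    by rewrite sum_bin_bin_sign ?ltn_ord //; field; rewrite exp2_neq0 fact_neq0.
  by rewrite mulr_sumr; apply: eq_bigr => x _; field; rewrite exp2_neq0 fact_neq0.
under eq_bigr do rewrite !mxE.
rewrite (reindex_inj rev_ord_inj); under eq_bigr do rewrite rev_ordK.
rewrite (bigD1 (Ordinal (b_ltn i))) //= eqxx big1 ?addr0 => [|x /negbTE]; last first.
  by rewrite -val_eqE /= => ->; rewrite !mulr0 mul0r.
set m := (rev_ord j : nat).
have -> : n%:Z - i%:Z - j%:Z - f i = m.+1%:Z - (b i)%:Z.
  by rewrite bE /shift /m /=; have := ltn_ord j; lia.
rewrite invGamma_subn; case: (leqP (b i) m) => b_m; last first.
  by rewrite (@bin_small m (b i)) // !(mulr0, mul0r).
rewrite mulr1 (@signr_parity _ (i + j + 1) (i + b i + (m - b i)) k j.+1); last first.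
  by move: b_m; rewrite /m /=; have := ltn_ord j; lia.
rewrite exprD; ring.
Qed.

Lemma det_Dright : \det Dright = (\prod_(m < n) m`!%:R)^-1.
Proof.
rewrite det_trig; last first.
  apply/is_trig_mxP => x j lt_xj; rewrite mxE bin_small ?mulr0 ?mul0r //=.
  by have := ltn_ord j; lia.
rewrite -prodfV [RHS](reindex_inj rev_ord_inj).
by apply: eq_bigr => j _; rewrite mxE subnn binn expr0 !mul1r.
Qed.

Lemma rev_ord_sigma r : rev_ord (sigma r) = colpos r.
Proof. by rewrite permE rev_ordK. Qed.

Local Notation Dleft_perm := (col_perm sigma Dleft).

Lemma dlsubmx_Dleft_perm : dlsubmx Dleft_perm = 0.
Proof.
apply/matrixP => i j; rewrite !mxE (unsplitK (inr _ i)) mxE rev_ord_sigma colpos_lshift.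
by rewrite (negbTE (c_neq_b j i)) mulr0.
Qed.

Lemma det_drsubmx_Dleft_perm :
  \det (drsubmx Dleft_perm) = \prod_(i < k) ((-1) ^+ (i + b i) * (b i)`!%:R).
Proof.
have entry i j : drsubmx Dleft_perm i j
    = (-1) ^+ (i + b i) * (b i)`!%:R * (b j == b i)%:R.
  by rewrite !mxE (unsplitK (inr _ i)) mxE rev_ord_sigma colpos_rshift.
rewrite det_trig; first by apply: eq_bigr => i _; rewrite entry eqxx mulr1.
apply/is_trig_mxP => i j lt_ij; rewrite entry.
have /negbTE-> : b j != b i by rewrite (inj_eq b_inj) -val_eqE /= gtn_eqF.
by rewrite mulr0.
Qed.

Lemma det_ulsubmx_Dleft_perm : \det (ulsubmx Dleft_perm) =
  \prod_(i < k) ((a i)`!%:R / 2 ^+ a i) * \prod_(j < k) 2 ^+ c j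
  * \det (\matrix_(i < k, j < k) 'C(c j, a i)%:R).
Proof.
rewrite -det_scale_rows_cols; congr (\det _); apply/matrixP => i j.
by rewrite !mxE (unsplitK (inl _ i)) mxE rev_ord_sigma colpos_lshift; ring.
Qed.

Lemma det_Dleft :
  \det Dleft = (-1) ^+ sigma * \det (ulsubmx Dleft_perm) * \det (drsubmx Dleft_perm).
Proof.
rewrite -mulrA -(det_ublock _ (ursubmx Dleft_perm)) -dlsubmx_Dleft_perm submxK.
by rewrite det_col_perm mulrA -signr_addb addbb mul1r.
Qed.

Lemma prod_fact_double :
  \prod_(m < n) m`!%:R = \prod_(l < k) (l`! * (k + l)`!)%:R :> R.
Proof.
rewrite big_split_ord [RHS](eq_bigr (fun l : 'I_k => l`!%:R * (k + l)`!%:R)) ?big_split //.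
by move=> l _; rewrite natrM.
Qed.

Theorem det_Dmat : \det (Dmat R e f) =
  (-1) ^+ ninv f *
  \prod_(l < k)
     (((a l)`! * (b l)`!)%:R / (l`! * (k + l)`!)%:R * 2 ^ ((c l)%:Z - shift e l))
  * \det (\matrix_(i < k, j < k) 'C(c j, a i)%:R).
Proof.
rewrite Dmat_factor det_mulmx det_Dright det_Dleft.
rewrite det_ulsubmx_Dleft_perm det_drsubmx_Dleft_perm prod_fact_double -sign_sigma.
have sign_sq m : (-1) ^+ m * (-1) ^+ m = 1 :> R by rewrite -exprMn mulrNN mulr1 expr1n.
set S := \prod_(i < k) (-1) ^+ (i + b i).
have S2 : S * S = 1 by rewrite -big_split big1 //= => i _; rewrite sign_sq.
rewrite [in RHS](eq_bigr (fun l => (a l)`!%:R / 2 ^+ a l * 2 ^+ c l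
    * ((-1) ^+ (l + b l) * (b l)`!%:R) * (-1) ^+ (l + b l) / (l`! * (k + l)`!)%:R)).
  rewrite !big_split /= -/S !prodfV -[LHS]mulr1 -[X in _ * X = _]S2.
  (* Abstracted, as ring would otherwise try to evaluate the parity of sigma. *)
  by move: ((-1) ^+ sigma) => sgn; ring.
move=> l _; rewrite -aE expfzDr ?pnatr_eq0 // -exprnP -exprnN natrM.
rewrite -[LHS]mul1r -{1}(sign_sq (l + b l)%N); ring.
Qed.
End DetDmat.

Theorem lemma6 (R : numFieldType) (k : nat) (e f : 'I_k -> int) :
  (1 <= k)%N ->
  (forall i, 0 <= shift e i) -> injective (shift e) ->
  (forall i, 0 <= shift f i < (k + k)%:Z) -> injective (shift f) ->
  let c := fun j : 'I_k => nth 0%N (compl_seq f) j in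
  \det (Dmat R e f) =
  sgnf R f *
  (\prod_(l < k)
     ((((absz (shift e l))`! * (absz (shift f l))`!)%:R
        / ((l`! * (k + l)`!)%:R : R))
      * (2 : R) ^ ((c l)%:Z - shift e l)))
  * \det (\matrix_(i < k, j < k) ('C(c j, absz (shift e i)))%:R : 'M[R]_k).
Proof.
(* The identity holds without k >= 1 and without the injectivity of e. *)
by move=> _ e_ge0 _ f_bound f_inj; apply: det_Dmat.
Qed.
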